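(* Let $p\in(1,5)$ and consider the third-order ordinary differential equation $\mathcal{L}u=0$ on $\mathbb{R}$, where $\mathcal{L}=\partial_x(-\partial_x^2+1-p\,\phi^{p-1})$. Its space of solutions is spanned by $\{\phi',h_2,h_3\}$, where $h_2,h_3$ are even functions satisfying $\lim_{x\to+\infty}h_2(x)=1$ and $\lim_{x\to+\infty}h_3(x)=\infty$. In particular, there is no solution $u$ of $\mathcal{L}u=0$ with $\lim_{x\to-\infty}u(x)=1$ and $\lim_{x\to+\infty}|u(x)|=\infty$.
   Context: $\phi(x)=\left(\frac{p+1}{2}\right)^{\frac1{p-1}}\mathrm{sech}^{\frac2{p-1}}\left(\frac{p-1}2x\right)$. *)

From Stdlib Require Import Reals.
From Coquelicot Require Import Coquelicot.
Open Scope R_scope.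

Definition sech (x : R) : R := / cosh x.

Definition phi (p x : R) : R :=
  Rpower ((p + 1) / 2) (1 / (p - 1)) *
  Rpower (sech ((p - 1) / 2 * x)) (2 / (p - 1)).

Definition Linner (p : R) (u : R -> R) (x : R) : R :=
  - Derive (Derive u) x + u x - p * Rpower (phi p x) (p - 1) * u x.

Definition is_sol (p : R) (u : R -> R) : Prop :=
  (forall x, ex_derive u x /\ ex_derive (Derive u) x) /\
  (forall x, is_derive (Linner p u) x 0).

(* Put b = (p - 1) / 2 and w(x) = cosh(b x)^(1/b) ([cpow]), so that w' = tanh(b x) w, phi = A / w
   with A = ((p + 1) / 2)^(1/(p - 1)) ([amp p]), and the potential is
   q = 1 - p phi^(p-1) = 1 - (2b + 1)(b + 1)(1 - tanh(b x)^2).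
   L u = 0 says that -u'' + q u is a constant k.  The functions
     y1 = tanh(b x) / w  (= -phi' / A),
     h3 = (b + 2) y1 (int_0^x w^2) - w,   h2 = ((b + 1) y1 (int_0^x w) - 1) / b
   satisfy y1'' = q y1, h3'' = q h3 and -h2'' + q h2 = 1, as one checks by differentiating.
   Hence u - k h2 solves the homogeneous equation, and as the Wronskian of y1 and h3 is b <> 0,
   u is a combination of y1, h2 and h3.  By L'Hopital, (int_0^x w) / w -> 1 and
   (int_0^x w^2) / w^2 -> 1/2, so h2 -> 1 and h3 ~ (b/2) w -> +oo; y1 is odd, h2 and h3 even.
   If a y1 + k h2 + c h3 has a finite limit at -oo, reflecting x shows that c = 0 (otherwise h3
   would converge at +oo), so the limit is k at both ends: a solution tending to 1 at -oo tends
   to 1 at +oo. *)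

From Stdlib Require Import Reals Lra.
From Coquelicot Require Import Coquelicot.
Open Scope R_scope.

Lemma is_derive_0_constant (f : R -> R) :
  (forall x, is_derive f x 0) -> constant f.
Proof.
  intro Hf.
  pose (pr := fun x => exist _ 0 (proj1 (is_derive_Reals f x 0) (Hf x)) : derivable_pt f x).
  apply (null_derivative_1 f pr); intro x.
  apply derive_pt_eq_0, is_derive_Reals, Hf.
Qed.

Lemma is_derive_Rmult (f g : R -> R) (x df dg : R) :
  is_derive f x df -> is_derive g x dg ->
  is_derive (fun t => f t * g t) x (df * g x + f x * dg).
Proof. intros; apply (is_derive_mult f g); auto; intros; apply Rmult_comm. Qed.

Lemma is_derive_pos_le (k dk : R -> R) (M : R) :
  (forall x, is_derive k x (dk x)) -> (forall x, M <= x -> 0 < dk x) ->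
  forall x, M <= x -> k M <= k x.
Proof.
  intros Hk Hpos x [HMx | <-]; [| apply Rle_refl].
  left; apply (incr_function_le k M p_infty dk); simpl; auto.
  - intros y HMy _; apply Hpos, HMy.
  - apply Rle_refl.
Qed.

Lemma is_derive_sub_scal_le (f g df dg : R -> R) (c M : R) :
  (forall x, is_derive f x (df x)) -> (forall x, is_derive g x (dg x)) ->
  (forall y, M <= y -> c * dg y < df y) ->
  forall x, M <= x -> f M - c * g M <= f x - c * g x.
Proof.
  intros Hf Hg Hslope.
  apply (is_derive_pos_le (fun x => f x - c * g x) (fun x => df x - c * dg x)).
  - intro x; apply (is_derive_minus f (fun x => c * g x)); [| apply is_derive_scal]; auto.
  - intros y Hy; specialize (Hslope y Hy); lra.
Qed.

Lemma is_lim_lhopital_p_infty (f g df dg : R -> R) (L : R) :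
  (forall x, is_derive f x (df x)) -> (forall x, is_derive g x (dg x)) ->
  Rbar_locally p_infty (fun x => 0 < dg x) -> is_lim g p_infty p_infty ->
  is_lim (fun x => df x / dg x) p_infty L ->
  is_lim (fun x => f x / g x) p_infty L.
Proof.
  intros Hf Hg [M0 Hdg] Hglim Hratio.
  apply is_lim_spec in Hglim; apply is_lim_spec in Hratio; apply is_lim_spec.
  intro eps; set (e := eps / 2).
  assert (He : 0 < e) by (unfold e; destruct eps; simpl; lra).
  destruct (Hratio (mkposreal e He)) as [M1 HM1]; simpl in HM1.
  set (M := Rmax M0 M1 + 1).
  assert (Hslope : forall y, M <= y -> (L - e) * dg y < df y < (L + e) * dg y).
  { intros y Hy.
    assert (M0 < y /\ M1 < y) as [HM0y HM1y] by
      (unfold M in Hy; pose proof (Rmax_l M0 M1); pose proof (Rmax_r M0 M1); lra).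
    specialize (Hdg y HM0y); specialize (HM1 y HM1y); apply Rabs_def2 in HM1.
    replace (df y) with (df y / dg y * dg y) by (field; lra); split; nra. }
  (* Beyond [M], [f - (L - e) g] and [(L + e) g - f] increase, and [g] outgrows their
     values at [M]. *)
  assert (Hlow := is_derive_sub_scal_le f g df dg (L - e) M Hf Hg
                    (fun y Hy => proj1 (Hslope y Hy))).
  assert (Hupp := is_derive_sub_scal_le (fun x => - f x) g (fun x => - df x) dg
                    (- (L + e)) M (fun x => is_derive_opp f x (df x) (Hf x)) Hg
                    (fun y Hy => ltac:(specialize (Hslope y Hy); lra))).
  set (a := f M - (L - e) * g M) in *.
  set (a' := - f M - - (L + e) * g M) in *.
  destruct (Hglim ((Rabs a + Rabs a') / e)) as [N HN].
  exists (Rmax N M); intros x Hx.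
  assert (N < x /\ M <= x) as [HNx HMx] by
    (pose proof (Rmax_l N M); pose proof (Rmax_r N M); lra).
  assert (Hgx : Rabs a + Rabs a' < e * g x).
  { rewrite Rmult_comm; apply Rlt_div_l; auto. }
  assert (0 < g x) by (pose proof (Rabs_pos a); pose proof (Rabs_pos a'); nra).
  replace (f x / g x - L) with ((f x - L * g x) / g x) by (field; lra).
  rewrite Rabs_div, (Rabs_pos_eq (g x)) by lra; apply Rlt_div_l; auto.
  specialize (Hlow x HMx); specialize (Hupp x HMx).
  pose proof (Rle_abs (- a)); pose proof (Rle_abs (- a')); rewrite !Rabs_Ropp in *.
  pose proof (Rabs_pos a); pose proof (Rabs_pos a').
  replace (pos eps) with (2 * e) by (unfold e; field).
  clearbody a a' e; apply Rabs_def1; lra.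
Qed.

Lemma ex_RInt_continuous_R (f : R -> R) (a b : R) :
  (forall t, continuous f t) -> ex_RInt f a b.
Proof. intro Hf; apply (ex_RInt_continuous (V := R_CompleteNormedModule)); auto. Qed.

Lemma is_derive_RInt_from_0 (f : R -> R) (x : R) :
  (forall t, continuous f t) -> is_derive (fun x => RInt f 0 x) x (f x).
Proof.
  intro Hf; apply (is_derive_RInt f (fun x => RInt f 0 x) 0); auto.
  apply filter_forall; intro y.
  apply (RInt_correct (V := R_CompleteNormedModule)), ex_RInt_continuous_R, Hf.
Qed.

Lemma RInt_0_opp_even (f : R -> R) (x : R) :
  (forall t, continuous f t) -> (forall t, f (- t) = f t) ->
  RInt f 0 (- x) = - RInt f 0 x.
Proof.
  intros Hf Heven.
  assert (Hf_int : forall a b, is_RInt f a b (RInt f a b)) by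
    (intros; apply (RInt_correct (V := R_CompleteNormedModule)), ex_RInt_continuous_R, Hf).
  pose proof (is_RInt_comp_opp (V := R_NormedModule) f 0 x _ (Hf_int (- 0) (- x))) as Hopp.
  rewrite Ropp_0 in Hopp.
  apply (is_RInt_ext _ (fun y => - f y)) in Hopp; [| intros; rewrite Heven; reflexivity].
  apply (is_RInt_unique (V := R_CompleteNormedModule)) in Hopp.
  rewrite <- Hopp.
  apply (RInt_opp (V := R_CompleteNormedModule)), ex_RInt_continuous_R, Hf.
Qed.

Section SecondOrderLinear.

Variable q : R -> R.

Definition hom_sol (y dy : R -> R) : Prop :=
  (forall x, is_derive y x (dy x)) /\ (forall x, is_derive dy x (q x * y x)).

Definition wronskian (y1 dy1 y2 dy2 : R -> R) (x : R) : R :=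
  y1 x * dy2 x - dy1 x * y2 x.

Lemma wronskian_constant (y1 dy1 y2 dy2 : R -> R) :
  hom_sol y1 dy1 -> hom_sol y2 dy2 -> constant (wronskian y1 dy1 y2 dy2).
Proof.
  intros [Hy1 Hdy1] [Hy2 Hdy2]; apply is_derive_0_constant; intro x.
  replace 0 with ((dy1 x * dy2 x + y1 x * (q x * y2 x))
                  - (q x * y1 x * y2 x + dy1 x * dy2 x)) by ring.
  apply (is_derive_minus (fun x => y1 x * dy2 x) (fun x => dy1 x * y2 x));
    apply is_derive_Rmult; auto.
Qed.

Lemma hom_sol_span (y1 dy1 y2 dy2 y dy : R -> R) :
  hom_sol y1 dy1 -> hom_sol y2 dy2 -> wronskian y1 dy1 y2 dy2 0 <> 0 ->
  hom_sol y dy -> exists a c, forall x, y x = a * y1 x + c * y2 x.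
Proof.
  intros H1 H2 HW H.
  exists (- wronskian y2 dy2 y dy 0 / wronskian y1 dy1 y2 dy2 0),
    (wronskian y1 dy1 y dy 0 / wronskian y1 dy1 y2 dy2 0); intro x.
  rewrite <- (wronskian_constant _ _ _ _ H1 H2 x 0), <- (wronskian_constant _ _ _ _ H2 H x 0),
    <- (wronskian_constant _ _ _ _ H1 H x 0) in *.
  unfold wronskian in *; field; auto.
Qed.

End SecondOrderLinear.

Lemma Rpower_inv (x y : R) : 0 < x -> Rpower (/ x) y = / Rpower x y.
Proof.
  intro Hx; unfold Rpower; rewrite ln_Rinv, <- exp_Ropp by auto; f_equal; ring.
Qed.

Lemma cosh_pos (y : R) : 0 < cosh y.
Proof. unfold cosh; pose proof (exp_pos y); pose proof (exp_pos (- y)); lra. Qed.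

Lemma cosh_even (y : R) : cosh (- y) = cosh y.
Proof. unfold cosh; rewrite Ropp_involutive, Rplus_comm; reflexivity. Qed.

Lemma tanh_odd (y : R) : tanh (- y) = - tanh y.
Proof.
  unfold tanh; rewrite cosh_even; unfold sinh; rewrite Ropp_involutive.
  pose proof (cosh_pos y); field; lra.
Qed.

Lemma tanh_0 : tanh 0 = 0.
Proof. unfold tanh, sinh; rewrite Ropp_0; unfold Rdiv; ring. Qed.

Lemma tanh_pos (y : R) : 0 < y -> 0 < tanh y.
Proof.
  intro Hy; unfold tanh, sinh; apply Rdiv_lt_0_compat; [| apply cosh_pos].
  pose proof (exp_increasing (- y) y); lra.
Qed.

Lemma cosh_sqr_sub_sinh_sqr (y : R) : cosh y ^ 2 - sinh y ^ 2 = 1.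
Proof.
  assert (Hexp : exp y * exp (- y) = 1) by (rewrite <- exp_plus, Rplus_opp_r; apply exp_0).
  unfold cosh, sinh; nra.
Qed.

Lemma one_sub_tanh_sqr (y : R) : 1 - tanh y ^ 2 = / cosh y ^ 2.
Proof.
  pose proof (cosh_pos y) as Hc; pose proof (cosh_sqr_sub_sinh_sqr y) as Hcs.
  replace (/ cosh y ^ 2) with ((cosh y ^ 2 - sinh y ^ 2) / cosh y ^ 2)
    by (rewrite Hcs; field; lra).
  unfold tanh; field; lra.
Qed.

Lemma is_derive_tanh (y : R) : is_derive tanh y (1 - tanh y ^ 2).
Proof.
  pose proof (cosh_pos y); pose proof (cosh_sqr_sub_sinh_sqr y).
  replace (1 - tanh y ^ 2) with ((cosh y * cosh y - sinh y * sinh y) / cosh y ^ 2)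
    by (unfold tanh; field; lra).
  apply (is_derive_div sinh cosh); [| | lra];
    apply is_derive_Reals; [apply derivable_pt_lim_sinh | apply derivable_pt_lim_cosh].
Qed.

Lemma is_lim_tanh_p_infty : is_lim tanh p_infty 1.
Proof.
  apply (is_lim_ext (fun y => 1 - 2 * / (exp (y + y) + 1))).
  { intro y; unfold tanh, sinh, cosh; rewrite exp_Ropp, exp_plus.
    pose proof (exp_pos y); field; nra. }
  replace (Finite 1) with (Finite (1 - 2 * 0)) by (f_equal; ring).
  apply is_lim_minus'; [apply is_lim_const |].
  apply (is_lim_scal_l _ 2 p_infty 0).
  replace (Finite 0) with (Rbar_inv p_infty) by reflexivity.
  apply is_lim_inv; [| discriminate].
  apply (is_lim_plus _ _ _ p_infty 1); [| apply is_lim_const | reflexivity].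
  apply (is_lim_comp exp (fun y => y + y) p_infty p_infty p_infty).
  - apply is_lim_exp_p.
  - apply (is_lim_plus _ _ _ p_infty p_infty); [apply is_lim_id | apply is_lim_id | reflexivity].
  - exists 0; discriminate.
Qed.

Section Soliton.

Variable b : R.
Hypothesis b_pos : 0 < b.

Definition th (x : R) : R := tanh (b * x).
Definition cpow (x : R) : R := Rpower (cosh (b * x)) (/ b).
Definition cpow_int (x : R) : R := RInt cpow 0 x.
Definition cpow2_int (x : R) : R := RInt (fun s => cpow s ^ 2) 0 x.

Definition pot (x : R) : R := 1 - (2 * b + 1) * (b + 1) * (1 - th x ^ 2).

Definition y1 (x : R) : R := th x / cpow x.
Definition dy1 (x : R) : R := (b - (b + 1) * th x ^ 2) / cpow x.
Definition h2 (x : R) : R := ((b + 1) * y1 x * cpow_int x - 1) / b.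
Definition dh2 (x : R) : R := (b + 1) / b * (dy1 x * cpow_int x + th x).
Definition h3 (x : R) : R := (b + 2) * y1 x * cpow2_int x - cpow x.
Definition dh3 (x : R) : R := (b + 2) * dy1 x * cpow2_int x + (b + 1) * th x * cpow x.

Lemma cpow_pos (x : R) : 0 < cpow x.
Proof. apply exp_pos. Qed.

Lemma is_derive_th (x : R) : is_derive th x (b * (1 - th x ^ 2)).
Proof.
  unfold th; apply (is_derive_comp tanh (fun x => b * x)); [apply is_derive_tanh |].
  auto_derive; [exact I | ring].
Qed.

Lemma is_derive_cpow (x : R) : is_derive cpow x (th x * cpow x).
Proof.
  unfold cpow, th, Rpower, tanh; pose proof (cosh_pos (b * x)).
  auto_derive; [lra | field; lra].
Qed.

Lemma cpow_continuous (x : R) : continuous cpow x.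
Proof.
  apply (ex_derive_continuous (V := R_NormedModule)); eexists; apply is_derive_cpow.
Qed.

Lemma cpow_sqr_continuous (x : R) : continuous (fun s => cpow s ^ 2) x.
Proof.
  apply (ex_derive_continuous (V := R_NormedModule)); eexists.
  apply is_derive_pow, is_derive_cpow.
Qed.

Lemma is_derive_cpow_int (x : R) : is_derive cpow_int x (cpow x).
Proof. exact (is_derive_RInt_from_0 cpow x cpow_continuous). Qed.

Lemma is_derive_cpow2_int (x : R) : is_derive cpow2_int x (cpow x ^ 2).
Proof. exact (is_derive_RInt_from_0 (fun s => cpow s ^ 2) x cpow_sqr_continuous). Qed.

(* [auto_derive] treats [th], [cpow] and the integrals as opaque functions: it asks for their
   differentiability and leaves their [Derive], which are supplied by the lemmas above. *)
Ltac derive_closed_form :=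
  match goal with |- is_derive _ ?x _ => pose proof (cpow_pos x) end;
  unfold h2, dh2, h3, dh3, y1, dy1, pot;
  auto_derive;
  [ repeat split;
    match goal with
    | |- ex_derive (fun t => th t) ?x => exists (b * (1 - th x ^ 2)); apply is_derive_th
    | |- ex_derive (fun t => cpow t) ?x => exists (th x * cpow x); apply is_derive_cpow
    | |- ex_derive (fun t => cpow_int t) ?x => exists (cpow x); apply is_derive_cpow_int
    | |- ex_derive (fun t => cpow2_int t) ?x => exists (cpow x ^ 2); apply is_derive_cpow2_int
    | |- cpow _ <> 0 => apply Rgt_not_eq, cpow_pos
    | |- b <> 0 => apply Rgt_not_eq, b_pos
    | |- True => exact I
    end
  | rewrite ?(is_derive_unique _ _ _ (is_derive_th _)),
      ?(is_derive_unique _ _ _ (is_derive_cpow _)),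
      ?(is_derive_unique _ _ _ (is_derive_cpow_int _)),
      ?(is_derive_unique _ _ _ (is_derive_cpow2_int _));
    field; lra ].

Lemma is_derive_y1 (x : R) : is_derive y1 x (dy1 x).
Proof. derive_closed_form. Qed.

Lemma is_derive_dy1 (x : R) : is_derive dy1 x (pot x * y1 x).
Proof. derive_closed_form. Qed.

Lemma is_derive_h2 (x : R) : is_derive h2 x (dh2 x).
Proof. derive_closed_form. Qed.

Lemma is_derive_dh2 (x : R) : is_derive dh2 x (pot x * h2 x - 1).
Proof. derive_closed_form. Qed.

Lemma is_derive_h3 (x : R) : is_derive h3 x (dh3 x).
Proof. derive_closed_form. Qed.

Lemma is_derive_dh3 (x : R) : is_derive dh3 x (pot x * h3 x).
Proof. derive_closed_form. Qed.

Lemma th_0 : th 0 = 0.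
Proof. unfold th; rewrite Rmult_0_r; apply tanh_0. Qed.

Lemma cpow_0 : cpow 0 = 1.
Proof. unfold cpow, Rpower; rewrite Rmult_0_r, cosh_0, ln_1, Rmult_0_r; apply exp_0. Qed.

Lemma cpow2_int_0 : cpow2_int 0 = 0.
Proof. apply (RInt_point (V := R_CompleteNormedModule)). Qed.

Lemma wronskian_y1_h3_0 : wronskian y1 dy1 h3 dh3 0 = b.
Proof.
  unfold wronskian, h3, dh3, y1, dy1.
  rewrite th_0, cpow_0, cpow2_int_0; field.
Qed.

Lemma pot_sol_span (u du : R -> R) (k : R) :
  (forall x, is_derive u x (du x)) -> (forall x, is_derive du x (pot x * u x - k)) ->
  exists a c, forall x, u x = a * y1 x + k * h2 x + c * h3 x.
Proof.
  intros Hu Hdu.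
  destruct (hom_sol_span pot y1 dy1 h3 dh3 (fun x => u x - k * h2 x)
              (fun x => du x - k * dh2 x)) as [a [c Hac]].
  - split; [exact is_derive_y1 | exact is_derive_dy1].
  - split; [exact is_derive_h3 | exact is_derive_dh3].
  - rewrite wronskian_y1_h3_0; lra.
  - split; intro x.
    + apply (is_derive_minus u (fun x => k * h2 x)); [| apply is_derive_scal]; auto.
      apply is_derive_h2.
    + replace (pot x * (u x - k * h2 x)) with ((pot x * u x - k) - k * (pot x * h2 x - 1))
        by ring.
      apply (is_derive_minus du (fun x => k * dh2 x)); [| apply is_derive_scal]; auto.
      apply is_derive_dh2.
  - exists a, c; intro x; specialize (Hac x); simpl in Hac; lra.
Qed.

Lemma th_pos (x : R) : 0 < x -> 0 < th x.
Proof. intro Hx; apply tanh_pos, Rmult_lt_0_compat; auto. Qed.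

Lemma is_lim_th : is_lim th p_infty 1.
Proof.
  apply (is_lim_comp tanh (fun x => b * x) p_infty 1 p_infty).
  - apply is_lim_tanh_p_infty.
  - apply is_lim_spec; intro M; exists (M / b); intros x Hx.
    rewrite Rmult_comm; apply Rlt_div_l; auto.
  - exists 0; discriminate.
Qed.

Lemma cpow_ge_affine (x : R) : 1 + x - ln 2 / b <= cpow x.
Proof.
  unfold cpow, Rpower.
  assert (Hcosh : exp (b * x) / 2 <= cosh (b * x))
    by (unfold cosh; pose proof (exp_pos (- (b * x))); lra).
  apply ln_le in Hcosh; [| pose proof (exp_pos (b * x)); lra].
  unfold Rdiv in Hcosh; rewrite ln_mult, ln_exp, ln_Rinv in Hcosh by
    (try apply exp_pos; try apply Rinv_0_lt_compat; lra).
  apply Rmult_le_compat_l with (r := / b) in Hcosh; [| left; apply Rinv_0_lt_compat, b_pos].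
  pose proof (exp_ineq1_le (/ b * ln (cosh (b * x)))).
  replace (/ b * (b * x + - ln 2)) with (x - ln 2 / b) in Hcosh by (field; lra).
  lra.
Qed.

Lemma is_lim_cpow : is_lim cpow p_infty p_infty.
Proof.
  apply is_lim_spec; intro M; exists (M + ln 2 / b); intros x Hx.
  pose proof (cpow_ge_affine x); lra.
Qed.

Lemma is_lim_cpow_int_ratio : is_lim (fun x => cpow_int x / cpow x) p_infty 1.
Proof.
  apply (is_lim_lhopital_p_infty cpow_int cpow cpow (fun x => th x * cpow x)).
  - exact is_derive_cpow_int.
  - exact is_derive_cpow.
  - exists 0; intros x Hx; apply Rmult_lt_0_compat; [apply th_pos | apply cpow_pos]; auto.
  - exact is_lim_cpow.
  - apply (is_lim_ext_loc (fun x => / th x)).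
    + exists 0; intros x Hx; pose proof (th_pos x Hx); pose proof (cpow_pos x); field; lra.
    + replace (Finite 1) with (Rbar_inv 1) by (simpl; f_equal; field).
      apply is_lim_inv; [exact is_lim_th | injection; lra].
Qed.

Lemma is_lim_cpow2_int_ratio : is_lim (fun x => cpow2_int x / cpow x ^ 2) p_infty (1 / 2).
Proof.
  apply (is_lim_lhopital_p_infty cpow2_int (fun x => cpow x ^ 2) (fun x => cpow x ^ 2)
           (fun x => 2 * th x * cpow x ^ 2)).
  - exact is_derive_cpow2_int.
  - intro x; replace (2 * th x * cpow x ^ 2) with (INR 2 * (th x * cpow x) * cpow x ^ 1)
      by (simpl; ring).
    apply is_derive_pow, is_derive_cpow.
  - exists 0; intros x Hx; pose proof (th_pos x Hx); pose proof (cpow_pos x).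
    apply Rmult_lt_0_compat; [lra | apply pow_lt; auto].
  - apply (is_lim_ext (fun x => cpow x * cpow x)); [intro; ring |].
    apply (is_lim_mult cpow cpow p_infty p_infty p_infty is_lim_cpow is_lim_cpow I).
  - apply (is_lim_ext_loc (fun x => / (2 * th x))).
    + exists 0; intros x Hx; pose proof (th_pos x Hx); pose proof (cpow_pos x); field; lra.
    + replace (Finite (1 / 2)) with (Rbar_inv (2 * 1)) by (simpl; f_equal; field).
      apply is_lim_inv; [apply (is_lim_scal_l th 2 p_infty 1), is_lim_th | injection; lra].
Qed.

Lemma is_lim_y1 : is_lim y1 p_infty 0.
Proof.
  replace (Finite 0) with (Rbar_mult 1 (Rbar_inv p_infty)) by (simpl; f_equal; ring).
  apply (is_lim_mult th (fun x => / cpow x)); [exact is_lim_th | | exact I].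
  apply is_lim_inv; [exact is_lim_cpow | discriminate].
Qed.

Lemma is_lim_h2 : is_lim h2 p_infty 1.
Proof.
  apply (is_lim_ext (fun x => ((b + 1) * th x * (cpow_int x / cpow x) - 1) / b)).
  { intro x; pose proof (cpow_pos x); unfold h2, y1; field; lra. }
  replace (Finite 1) with (Finite (((b + 1) * 1 * 1 - 1) / b)) by (f_equal; field; lra).
  apply (is_lim_scal_r _ (/ b) p_infty (Finite ((b + 1) * 1 * 1 - 1))).
  apply is_lim_minus'; [| apply is_lim_const].
  apply (is_lim_mult (fun x => (b + 1) * th x) _ p_infty ((b + 1) * 1) 1);
    [| exact is_lim_cpow_int_ratio | exact I].
  apply (is_lim_scal_l th (b + 1) p_infty 1), is_lim_th.
Qed.

Lemma is_lim_h3 : is_lim h3 p_infty p_infty.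
Proof.
  apply (is_lim_ext (fun x => cpow x * ((b + 2) * th x * (cpow2_int x / cpow x ^ 2) - 1))).
  { intro x; pose proof (cpow_pos x); unfold h3, y1; field; lra. }
  assert (Hinner : is_lim (fun x => (b + 2) * th x * (cpow2_int x / cpow x ^ 2) - 1) p_infty
                     ((b + 2) * 1 * (1 / 2) - 1)).
  { apply is_lim_minus'; [| apply is_lim_const].
    apply (is_lim_mult (fun x => (b + 2) * th x) _ p_infty ((b + 2) * 1) (1 / 2));
      [| exact is_lim_cpow2_int_ratio | exact I].
    apply (is_lim_scal_l th (b + 2) p_infty 1), is_lim_th. }
  assert (Hpos : Rbar_lt 0 ((b + 2) * 1 * (1 / 2) - 1)) by (simpl; lra).
  pose proof (is_lim_mult _ _ _ _ _ is_lim_cpow Hinner) as Hlim.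
  rewrite (is_Rbar_mult_unique _ _ _ (is_Rbar_mult_p_infty_pos _ Hpos)) in Hlim.
  apply Hlim; simpl in Hpos |- *; lra.
Qed.

Lemma th_odd (x : R) : th (- x) = - th x.
Proof. unfold th; rewrite <- tanh_odd; f_equal; ring. Qed.

Lemma cpow_even (x : R) : cpow (- x) = cpow x.
Proof. unfold cpow; rewrite <- (cosh_even (b * x)); do 2 f_equal; ring. Qed.

Lemma y1_odd (x : R) : y1 (- x) = - y1 x.
Proof. unfold y1; rewrite th_odd, cpow_even; pose proof (cpow_pos x); field; lra. Qed.

Lemma h2_even (x : R) : h2 (- x) = h2 x.
Proof.
  unfold h2, cpow_int; rewrite y1_odd, (RInt_0_opp_even cpow x cpow_continuous cpow_even).
  field; lra.
Qed.

Lemma h3_even (x : R) : h3 (- x) = h3 x.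
Proof.
  unfold h3, cpow2_int; rewrite y1_odd, cpow_even.
  rewrite (RInt_0_opp_even (fun s => cpow s ^ 2) x cpow_sqr_continuous)
    by (intro; rewrite cpow_even; reflexivity).
  ring.
Qed.

Lemma span_is_lim_m_infty_p_infty (a k c l : R) :
  is_lim (fun x => a * y1 x + k * h2 x + c * h3 x) m_infty l ->
  is_lim (fun x => a * y1 x + k * h2 x + c * h3 x) p_infty l.
Proof.
  intro Hm.
  assert (Hrefl : is_lim (fun x => - a * y1 x + k * h2 x + c * h3 x) p_infty l).
  { apply (is_lim_ext (fun x => a * y1 (- x) + k * h2 (- x) + c * h3 (- x))).
    { intro x; rewrite y1_odd, h2_even, h3_even; ring. }
    apply (is_lim_comp (fun x => a * y1 x + k * h2 x + c * h3 x) Ropp p_infty l m_infty Hm).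
    - apply (is_lim_opp (fun x => x) p_infty p_infty), is_lim_id.
    - exists 0; discriminate. }
  assert (Hc : c = 0).
  { destruct (Req_dec c 0) as [| Hc]; auto; exfalso.
    assert (Hh3 : is_lim h3 p_infty ((l + a * 0 - k * 1) / c)).
    { apply (is_lim_ext
               (fun x => ((- a * y1 x + k * h2 x + c * h3 x) + a * y1 x - k * h2 x) / c)).
      { intro x; field; auto. }
      apply (is_lim_scal_r _ (/ c) p_infty (Finite (l + a * 0 - k * 1))).
      apply is_lim_minus'; [apply is_lim_plus'; [exact Hrefl |] |].
      - apply (is_lim_scal_l y1 a p_infty 0), is_lim_y1.
      - apply (is_lim_scal_l h2 k p_infty 1), is_lim_h2. }
    apply is_lim_unique in Hh3; rewrite (is_lim_unique _ _ _ is_lim_h3) in Hh3; discriminate. }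
  subst c.
  assert (Hlim : forall a', is_lim (fun x => a' * y1 x + k * h2 x + 0 * h3 x) p_infty k).
  { intro a'; apply (is_lim_ext (fun x => a' * y1 x + k * h2 x)); [intro; ring |].
    replace (Finite k) with (Finite (a' * 0 + k * 1)) by (f_equal; ring).
    apply is_lim_plus'.
    - apply (is_lim_scal_l y1 a' p_infty 0), is_lim_y1.
    - apply (is_lim_scal_l h2 k p_infty 1), is_lim_h2. }
  rewrite <- (is_lim_unique _ _ _ Hrefl), (is_lim_unique _ _ _ (Hlim (- a))).
  apply Hlim.
Qed.

End Soliton.

Definition amp (p : R) : R := Rpower ((p + 1) / 2) (1 / (p - 1)).

Lemma amp_pos (p : R) : 0 < amp p.
Proof. apply exp_pos. Qed.

Lemma phi_eq (p x : R) : 1 < p -> phi p x = amp p / cpow ((p - 1) / 2) x.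
Proof.
  intro Hp; unfold phi, amp, cpow, sech.
  rewrite Rpower_inv by apply cosh_pos.
  replace (2 / (p - 1)) with (/ ((p - 1) / 2)) by (field; lra).
  reflexivity.
Qed.

Lemma Derive_phi (p x : R) : 1 < p -> Derive (phi p) x = - amp p * y1 ((p - 1) / 2) x.
Proof.
  intro Hp; rewrite (Derive_ext _ (fun x => amp p / cpow ((p - 1) / 2) x))
    by (intro; apply phi_eq, Hp).
  assert (Hb : 0 < (p - 1) / 2) by lra.
  apply is_derive_unique; pose proof (cpow_pos ((p - 1) / 2) x).
  replace (- amp p * y1 ((p - 1) / 2) x) with
    (amp p * (- (th ((p - 1) / 2) x * cpow ((p - 1) / 2) x) / cpow ((p - 1) / 2) x ^ 2))
    by (unfold y1; field; lra).
  apply is_derive_scal, is_derive_inv; [apply is_derive_cpow, Hb | lra].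
Qed.

Lemma phi_pow_eq (p x : R) : 1 < p -> 1 - p * Rpower (phi p x) (p - 1) = pot ((p - 1) / 2) x.
Proof.
  intro Hp; rewrite phi_eq by auto.
  unfold pot, th, amp, cpow; rewrite one_sub_tanh_sqr.
  set (c := cosh ((p - 1) / 2 * x)); assert (Hc : 0 < c) by apply cosh_pos.
  set (A := Rpower ((p + 1) / 2) (1 / (p - 1))); set (E := Rpower c (/ ((p - 1) / 2))).
  change (Rpower (A / E) (p - 1)) with (Rpower (A * / E) (p - 1)).
  rewrite <- Rpower_mult_distr, Rpower_inv by (try apply Rinv_0_lt_compat; apply exp_pos).
  unfold A, E; rewrite !Rpower_mult.
  replace (1 / (p - 1) * (p - 1)) with 1 by (field; lra).
  replace (/ ((p - 1) / 2) * (p - 1)) with (INR 2) by (simpl; field; lra).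
  rewrite Rpower_1, Rpower_pow by lra.
  field; lra.
Qed.

Lemma is_sol_iff (p : R) (u : R -> R) : 1 < p ->
  is_sol p u <-> exists du k, (forall x, is_derive u x (du x)) /\
                             (forall x, is_derive du x (pot ((p - 1) / 2) x * u x - k)).
Proof.
  intro Hp.
  assert (HL : forall x, Linner p u x = - Derive (Derive u) x + pot ((p - 1) / 2) x * u x)
    by (intro x; unfold Linner; rewrite <- phi_pow_eq by auto; ring).
  split.
  - intros [Hd Hconst].
    exists (Derive u), (Linner p u 0); split; intro x.
    + apply Derive_correct, Hd.
    + rewrite <- (is_derive_0_constant _ Hconst x 0), HL.
      replace (_ - _) with (Derive (Derive u) x) by ring.
      apply Derive_correct, Hd.
  - intros [du [k [Hu Hdu]]].
    assert (Hdu' : forall x, is_derive (Derive u) x (pot ((p - 1) / 2) x * u x - k)).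
    { intro x; apply (is_derive_ext du); [| apply Hdu].
      intro t; symmetry; apply is_derive_unique, Hu. }
    split; [intro x; split; eexists; [apply Hu | apply Hdu'] |].
    intro x; apply (is_derive_ext (fun _ => k));
      [| apply (is_derive_const (V := R_NormedModule))].
    intro t; cbv beta; rewrite HL, (is_derive_unique _ _ _ (Hdu' t)).
    change (k = - (pot ((p - 1) / 2) t * u t - k) + pot ((p - 1) / 2) t * u t :> R); ring.
Qed.

Lemma is_sol_Derive_phi (p : R) : 1 < p -> is_sol p (Derive (phi p)).
Proof.
  intro Hp; assert (Hb : 0 < (p - 1) / 2) by lra.
  apply is_sol_iff; auto; exists (fun x => - amp p * dy1 ((p - 1) / 2) x), 0; split; intro x.
  - apply (is_derive_ext (fun x => - amp p * y1 ((p - 1) / 2) x)).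
    { intro t; symmetry; apply Derive_phi, Hp. }
    apply is_derive_scal, is_derive_y1, Hb.
  - rewrite Derive_phi by auto.
    replace (_ - 0) with (- amp p * (pot ((p - 1) / 2) x * y1 ((p - 1) / 2) x)) by ring.
    apply is_derive_scal, is_derive_dy1, Hb.
Qed.

Lemma is_sol_h2 (p : R) : 1 < p -> is_sol p (h2 ((p - 1) / 2)).
Proof.
  intro Hp; assert (Hb : 0 < (p - 1) / 2) by lra.
  apply is_sol_iff; auto; exists (dh2 ((p - 1) / 2)), 1; split; intro x;
    [apply is_derive_h2 | apply is_derive_dh2]; auto.
Qed.

Lemma is_sol_h3 (p : R) : 1 < p -> is_sol p (h3 ((p - 1) / 2)).
Proof.
  intro Hp; assert (Hb : 0 < (p - 1) / 2) by lra.
  apply is_sol_iff; auto; exists (dh3 ((p - 1) / 2)), 0; split; intro x;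
    [apply is_derive_h3 | rewrite Rminus_0_r; apply is_derive_dh3]; auto.
Qed.

Lemma is_sol_span (p : R) (u : R -> R) : 1 < p -> is_sol p u ->
  exists a k c, forall x,
    u x = a * y1 ((p - 1) / 2) x + k * h2 ((p - 1) / 2) x + c * h3 ((p - 1) / 2) x.
Proof.
  intros Hp Hu; apply is_sol_iff in Hu as [du [k [Hu Hdu]]]; auto.
  assert (Hb : 0 < (p - 1) / 2) by lra.
  destruct (pot_sol_span _ Hb u du k Hu Hdu) as [a [c Hac]]; eauto.
Qed.

Theorem mainTheorem6 (p : R) (hp1 : 1 < p) (hp5 : p < 5) :
  (exists h2 h3 : R -> R,
     is_sol p (Derive (phi p)) /\ is_sol p h2 /\ is_sol p h3 /\
     (forall x, h2 (- x) = h2 x) /\ (forall x, h3 (- x) = h3 x) /\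
     is_lim h2 p_infty 1 /\ is_lim h3 p_infty p_infty /\
     (forall u : R -> R, is_sol p u ->
        exists a b c : R, forall x,
          u x = a * Derive (phi p) x + b * h2 x + c * h3 x)) /\
  ~ (exists u : R -> R, is_sol p u /\ is_lim u m_infty 1 /\
       is_lim (fun x => Rabs (u x)) p_infty p_infty).
Proof.
  assert (Hb : 0 < (p - 1) / 2) by lra.
  split.
  - exists (h2 ((p - 1) / 2)), (h3 ((p - 1) / 2)).
    split; [apply is_sol_Derive_phi, hp1 |].
    split; [apply is_sol_h2, hp1 |].
    split; [apply is_sol_h3, hp1 |].
    split; [apply h2_even, Hb |].
    split; [apply h3_even, Hb |].
    split; [apply is_lim_h2, Hb |].
    split; [apply is_lim_h3, Hb |].
    intros u Hu; destruct (is_sol_span p u hp1 Hu) as [a [k [c Hu']]].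
    exists (- a / amp p), k, c; intro x.
    rewrite Hu', Derive_phi by auto; pose proof (amp_pos p); field; lra.
  - intros [u [Hu [Hm Hp]]].
    destruct (is_sol_span p u hp1 Hu) as [a [k [c Hu']]].
    apply (is_lim_ext _ _ _ _ Hu'), span_is_lim_m_infty_p_infty in Hm; auto.
    apply (is_lim_ext _ u _ _ (fun x => eq_sym (Hu' x))), is_lim_Rabs, is_lim_unique in Hm.
    rewrite (is_lim_unique _ _ _ Hp) in Hm; discriminate.
Qed.
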